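(* Let $K$ be a field and $L$ a $K$-space carrying an algebra $(L,\nabla,\eta)$ and a coalgebra $(L,\Delta,\epsilon)$ such that $\epsilon\circ\eta=\mathrm{id}_K$ and $\Delta\circ\eta=\eta\otimes\eta$. Let $1_L=\eta(1_K)$, $H=\mathrm{Hom}_K(L,L)$, $\underline H=\mathrm{Hom}_K(L\otimes L,L\otimes L)$, $H_1=\{f\in H\mid f(1_L)=1_L\}$, $\underline H_1=\{F\in\underline H\mid F(1_L\otimes1_L)=1_L\otimes1_L\}$, and let $s:\underline H\to H\otimes H$ be the split map $s(F)=F_1\otimes F_2$ with $F_1(x)=(\mathrm{id}_L\otimes\epsilon)(F(x\otimes1_L))$, $F_2(x)=(\epsilon\otimes\mathrm{id}_L)(F(1_L\otimes x))$. Then for every $f\in H_1$, $\Delta\circ f\circ\nabla\in\underline H_1$ and $s(\Delta\circ f\circ\nabla)=f\otimes f$. Moreover, for any linearly independent set $\mathcal B\subseteq H_1$ with span $H_{\mathcal B}$, defining $\Delta_{\mathcal B}(\sum_b x_b b)=\sum_b x_b\,b\otimes b$ and $\epsilon_{\mathcal B}(f)=\epsilon(f(1_L))$, $(H_{\mathcal B},\Delta_{\mathcal B},\epsilon_{\mathcal B})$ is a coalgebra.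
   Context: The identifications $L\otimes K\cong L\cong K\otimes L$ are used in the definitions of $F_1,F_2$. *)

From HB Require Import structures.
From mathcomp Require Import all_boot all_algebra.
From mathcomp Require Import boolp classical_sets functions.
From Stdlib Require Import ClassicalEpsilon.


Import GRing.Theory.
Local Open Scope ring_scope.

(* Tensor products of K-vector spaces, given by their universal property.   *)
Record tensor_product {K : fieldType} (V W : lmodType K) := TensorProduct {
  tp_space : lmodType K;
  tp_mul : V -> W -> tp_space;
  tp_mul_linl : forall w, linear (fun v => tp_mul v w);
  tp_mul_linr : forall v, linear (tp_mul v);
  tp_universal : forall (U : lmodType K) (g : V -> W -> U),
    (forall w, linear (fun v => g v w)) -> (forall v, linear (g v)) ->
    exists! h : tp_space -> U, linear h /\ (forall v w, h (tp_mul v w) = g v w)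
}.
Coercion tp_space : tensor_product >-> lmodType.
Arguments tp_space {K V W} t.
Arguments tp_mul {K V W} t _ _.

Definition tlift {K : fieldType} {V W : lmodType K} (T : tensor_product V W)
    {U : lmodType K} (g : V -> W -> U) : T -> U :=
  epsilon (inhabits (fun _ => 0))
    (fun h : T -> U => linear h /\ (forall v w, h (tp_mul T v w) = g v w)).

Definition tmap {K : fieldType} {V W V' W' : lmodType K}
    (T : tensor_product V W) (T' : tensor_product V' W')
    (f : V -> V') (g : W -> W') : T -> T' :=
  tlift T (fun v w => tp_mul T' (f v) (g w)).

Definition tassoc {K : fieldType} {U V W : lmodType K}
    {T : tensor_product U V} (Tl : tensor_product T W)
    {T' : tensor_product V W} (Tr : tensor_product U T') : Tl -> Tr :=
  epsilon (inhabits (fun _ => 0))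
    (fun h : Tl -> Tr => linear h /\
       (forall u v w, h (tp_mul Tl (tp_mul T u v) w) = tp_mul Tr u (tp_mul T' v w))).

(* Algebras and coalgebras over K (K (x) A and A (x) K identified with A).  *)
Definition is_algebra {K : fieldType} {A : lmodType K}
    {T : tensor_product A A} (Tl : tensor_product T A) (Tr : tensor_product A T)
    (m : T -> A) (u : K -> A) : Prop :=
  [/\ linear m, linear (u : K^o -> A),
      (forall t : Tl, m (tmap Tl T m id t) = m (tmap Tr T id m (tassoc Tl Tr t))),
      (forall k x, m (tp_mul T (u k) x) = k *: x) &
      (forall k x, m (tp_mul T x (u k)) = k *: x)].

Definition is_coalgebra {K : fieldType} {C : lmodType K}
    {T : tensor_product C C} (Tl : tensor_product T C) (Tr : tensor_product C T)
    (D : C -> T) (e : C -> K) : Prop :=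
  [/\ linear D, scalar e,
      (forall x, tassoc Tl Tr (tmap T Tl D id (D x)) = tmap T Tr id D (D x)),
      (forall x, tlift T (fun a b => e a *: b) (D x) = x) &
      (forall x, tlift T (fun a b => e b *: a) (D x) = x)].

(* Hom_K(U, V) as a K-space: the subspace of linear maps in U -> V.         *)
Definition linearb (K : fieldType) (U V : lmodType K) : {pred U -> V} :=
  fun f => `[< linear f >].

Lemma linearb_closed (K : fieldType) (U V : lmodType K) :
  subsemimod_closed (@linearb K U V).
Proof.
rewrite /linearb.
split; [split|].
- rewrite /in_mem /=; apply/asboolP => a x y /=.
  have -> : forall u : U, (0 : U -> V) u = 0 by [].
  by rewrite scaler0 addr0.
- move=> f g; rewrite /in_mem /= => /asboolP Lf /asboolP Lg; apply/asboolP => a x y.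
  have E : forall u : U, (f + g) u = f u + g u by [].
  by rewrite !E Lf Lg scalerDr !addrA (addrAC _ (f y)).
- move=> a f; rewrite /in_mem /= => /asboolP Lf; apply/asboolP => b x y.
  have E : forall u : U, (a *: f) u = a *: f u by [].
  by rewrite !E Lf scalerDr !scalerA mulrC.
Qed.

HB.instance Definition _ (K : fieldType) (U V : lmodType K) :=
  GRing.isSubmodClosed.Build K (U -> V) (@linearb K U V) (@linearb_closed K U V).

Record khom {K : fieldType} (U V : lmodType K) := KHom {
  hom_fun :> U -> V;
  _ : hom_fun \in @linearb K U V
}.
Arguments hom_fun {K U V} _ _.

HB.instance Definition _ (K : fieldType) (U V : lmodType K) :=
  [isSub for @hom_fun K U V].
HB.instance Definition _ (K : fieldType) (U V : lmodType K) :=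
  [Choice of khom U V by <:].
HB.instance Definition _ (K : fieldType) (U V : lmodType K) :=
  [SubChoice_isSubLmodule of khom U V by <:].

(* Packaging a function as an element of Hom (the zero map if not linear). *)
Definition mkhom {K : fieldType} {U V : lmodType K} (f : U -> V) : khom U V :=
  insubd 0 f.

Definition hom_unital {K : fieldType} {U : lmodType K} (one : U) : {pred khom U U} :=
  fun f => f one == one.

Definition split_hom {K : fieldType} {L : lmodType K} {TL : tensor_product L L}
    (eps : L -> K) (one : L) (TH : tensor_product (khom L L) (khom L L))
    (F : khom TL TL) : TH :=
  let F1 := fun x => tlift TL (fun a b => eps b *: a) (F (tp_mul TL x one)) in
  let F2 := fun x => tlift TL (fun a b => eps a *: b) (F (tp_mul TL one x)) in
  tp_mul TH (mkhom F1) (mkhom F2).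

Definition lin_indep {K : fieldType} {V : lmodType K} (B : set V) : Prop :=
  forall (s : seq V) (c : V -> K), uniq s -> (forall v, v \in s -> B v) ->
    \sum_(v <- s) c v *: v = 0 -> forall v, v \in s -> c v = 0.

Definition in_span {K : fieldType} {V : lmodType K} (B : set V) : {pred V} :=
  fun x => `[< exists s : seq (K * V),
                 (forall p, p \in s -> B p.2) /\ x = \sum_(p <- s) p.1 *: p.2 >].

Lemma in_span_closed (K : fieldType) (V : lmodType K) (B : set V) :
  subsemimod_closed (in_span B).
Proof.
split; [split|].
- by apply/asboolP; exists [::]; split => //; rewrite big_nil.
- move=> x y /asboolP[s [sB ->]] /asboolP[t [tB ->]]; apply/asboolP.
  exists (s ++ t); split; last by rewrite big_cat.
  by move=> p; rewrite mem_cat => /orP[/sB|/tB].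
- move=> a x /asboolP[s [sB ->]]; apply/asboolP.
  exists [seq (a * p.1, p.2) | p <- s]; split.
    by move=> p /mapP[q /sB Bq ->].
  by rewrite scaler_sumr big_map; apply: eq_bigr => p _; rewrite scalerA.
Qed.

HB.instance Definition _ (K : fieldType) (V : lmodType K) (B : set V) :=
  GRing.isSubmodClosed.Build K V (in_span B) (@in_span_closed K V B).

Record span_space {K : fieldType} {V : lmodType K} (B : set V) := SpanElt {
  span_val :> V;
  _ : span_val \in in_span B
}.
Arguments span_val {K V B} _.

HB.instance Definition _ (K : fieldType) (V : lmodType K) (B : set V) :=
  [isSub for (@span_val K V B)].
HB.instance Definition _ (K : fieldType) (V : lmodType K) (B : set V) :=
  [Choice of span_space B by <:].
HB.instance Definition _ (K : fieldType) (V : lmodType K) (B : set V) :=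
  [SubChoice_isSubLmodule of span_space B by <:].

Definition to_span {K : fieldType} {V : lmodType K} (B : set V) (x : V) :
  span_space B := insubd 0 x.

Definition DeltaB {K : fieldType} {V : lmodType K} {B : set V}
    (T : tensor_product (span_space B) (span_space B)) : span_space B -> T :=
  epsilon (inhabits (fun _ => 0))
    (fun D : span_space B -> T =>
       forall (s : seq V) (x : V -> K), uniq s -> (forall b, b \in s -> B b) ->
         D (to_span B (\sum_(b <- s) x b *: b))
         = \sum_(b <- s) x b *: tp_mul T (to_span B b) (to_span B b)).

Definition epsB {K : fieldType} {L : lmodType K} (eps : L -> K) (one : L)
    (B : set (khom L L)) : span_space B -> K :=
  fun f => eps ((span_val f : khom L L) one).

(* The convolution Delta o f o nabla is recovered from its two "restrictions"
   x |-> (id (x) eps)(Delta (f (nabla (x (x) 1)))) and its mirror image, because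
   1 is a unit for nabla and eps is a counit for Delta.  For the second
   part, linear independence of B makes b |-> b (x) b extend to a well defined
   linear map on span B; coassociativity and the counit laws are then checked
   on the group-like generators b, where they reduce to eps_B(b) = eps(b(1)) =
   eps(1) = 1. *)

From HB Require Import structures.
From mathcomp Require Import all_boot all_algebra.
From mathcomp Require Import boolp classical_sets functions.
From Stdlib Require Import ClassicalEpsilon.
Import GRing.Theory.
Local Open Scope ring_scope.

Section LinearFun.
Context {K : fieldType} {U V : lmodType K} {f : U -> V} (Lf : linear f).

Lemma lin0 : f 0 = 0.
Proof.
have := Lf 1 0 0; rewrite !scale1r addr0 => /(canLR (addrK (f 0))).
by rewrite subrr.
Qed.

Lemma linD x y : f (x + y) = f x + f y.
Proof. by have := Lf 1 x y; rewrite !scale1r. Qed.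

Lemma linZ a x : f (a *: x) = a *: f x.
Proof. by have := Lf a x 0; rewrite !addr0 lin0 addr0. Qed.

Lemma lin_sum (I : Type) (r : seq I) (F : I -> U) :
  f (\sum_(i <- r) F i) = \sum_(i <- r) f (F i).
Proof.
elim: r => [|i r IH]; first by rewrite !big_nil lin0.
by rewrite !big_cons linD IH.
Qed.

End LinearFun.

Lemma lin_comp (K : fieldType) (U V W : lmodType K) (f : U -> V) (g : V -> W) :
  linear f -> linear g -> linear (g \o f).
Proof. by move=> Lf Lg a x y /=; rewrite Lf Lg. Qed.

Lemma lin_id (K : fieldType) (U : lmodType K) : linear (@id U).
Proof. by []. Qed.

Arguments lin_comp {K U V W f g}.

Section TensorProduct.
Context {K : fieldType} {V W : lmodType K} (T : tensor_product V W).

Lemma tp_mulDl a x y w : tp_mul T (a *: x + y) w = a *: tp_mul T x w + tp_mul T y w.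
Proof. exact: tp_mul_linl. Qed.

Lemma tp_mulDr a x y v : tp_mul T v (a *: x + y) = a *: tp_mul T v x + tp_mul T v y.
Proof. exact: tp_mul_linr. Qed.

Section Lift.
Context {U : lmodType K} {g : V -> W -> U}.
Hypotheses (gl : forall w, linear (fun v => g v w)) (gr : forall v, linear (g v)).

Lemma tliftP : linear (tlift T g) /\ (forall v w, tlift T g (tp_mul T v w) = g v w).
Proof.
have [h [Hh _]] := tp_universal _ _ T _ _ gl gr.
exact: (epsilon_spec _ (fun h : T -> U => linear h /\ (forall v w, h (tp_mul T v w) = g v w))
  (ex_intro _ h Hh)).
Qed.

Lemma tlift_unique (h1 h2 : T -> U) :
  linear h1 -> (forall v w, h1 (tp_mul T v w) = g v w) ->
  linear h2 -> (forall v w, h2 (tp_mul T v w) = g v w) -> h1 = h2.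
Proof.
move=> L1 P1 L2 P2; have [h [_ uniq_h]] := tp_universal _ _ T _ _ gl gr.
by rewrite -(uniq_h h1) // -(uniq_h h2).
Qed.

End Lift.
End TensorProduct.

Lemma tmapP (K : fieldType) (V W V' W' : lmodType K)
    (T : tensor_product V W) (T' : tensor_product V' W') (f : V -> V') (g : W -> W') :
  linear f -> linear g ->
  linear (tmap T T' f g) /\
  (forall v w, tmap T T' f g (tp_mul T v w) = tp_mul T' (f v) (g w)).
Proof.
move=> Lf Lg; apply: tliftP => [w a x y | v a x y] /=.
  by rewrite Lf tp_mulDl.
by rewrite Lg tp_mulDr.
Qed.

Lemma tassocP (K : fieldType) (U V W : lmodType K)
    (T : tensor_product U V) (Tl : tensor_product T W)
    (T' : tensor_product V W) (Tr : tensor_product U T') :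
  linear (tassoc Tl Tr) /\
  (forall u v w, tassoc Tl Tr (tp_mul Tl (tp_mul T u v) w) = tp_mul Tr u (tp_mul T' v w)).
Proof.
pose g w u v := tp_mul Tr u (tp_mul T' v w).
have gl w v : linear (fun u => g w u v) by move=> a x y; rewrite /g tp_mulDl.
have gr w u : linear (g w u) by move=> a x y; rewrite /g tp_mulDl tp_mulDr.
(* The associator is lifted in two stages: [assoc_w] sends u (x) v to
   u (x) (v (x) w), and uniqueness of lifts makes it linear in w. *)
pose assoc_w w := tlift T (g w).
have assocP w := tliftP T (gl w) (gr w).
have assoc_linw t : linear (fun w => assoc_w w t).
  move=> a x y.
  suff -> : assoc_w (a *: x + y) = (fun t => a *: assoc_w x t + assoc_w y t) by [].
  apply: (tlift_unique T (gl _) (gr _)); [exact: (assocP _).1 | exact: (assocP _).2 | |].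
  - move=> b z z'; rewrite /assoc_w !(linD (assocP _).1) !(linZ (assocP _).1).
    by rewrite !scalerDr !scalerA mulrC addrACA.
  - by move=> u v; rewrite /assoc_w !(assocP _).2 /g !tp_mulDr.
have [Lh Ph] := tliftP Tl (g := fun t w => assoc_w w t) (fun w => (assocP w).1) assoc_linw.
have Hh : linear (tlift Tl (fun t w => assoc_w w t)) /\
    (forall u v w, tlift Tl (fun t w => assoc_w w t) (tp_mul Tl (tp_mul T u v) w)
                   = tp_mul Tr u (tp_mul T' v w)).
  by split=> // u v w; rewrite Ph /assoc_w (assocP w).2.
exact: (epsilon_spec _ (fun h : Tl -> Tr => linear h /\
  (forall u v w, h (tp_mul Tl (tp_mul T u v) w) = tp_mul Tr u (tp_mul T' v w)))
  (ex_intro _ _ Hh)).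
Qed.

Arguments tmapP {K V W V' W'} T T' {f g}.
Arguments tassocP {K U V W T} Tl {T'} Tr.

Section Convolution.
Context {K : fieldType} {L : lmodType K} {TL : tensor_product L L}.
Variables (nabla : TL -> L) (Delta : L -> TL) (eps : L -> K) (one : L).
Hypotheses (Lnabla : linear nabla) (LDelta : linear Delta).
Hypotheses (nabla1x : forall x, nabla (tp_mul TL one x) = x)
           (nablax1 : forall x, nabla (tp_mul TL x one) = x).
Hypotheses (counitl : forall x, tlift TL (fun a b => eps a *: b) (Delta x) = x)
           (counitr : forall x, tlift TL (fun a b => eps b *: a) (Delta x) = x).

Definition conv_hom (f : khom L L) : khom TL TL := mkhom (Delta \o f \o nabla).

Lemma conv_homE f : conv_hom f = Delta \o f \o nabla :> (TL -> TL).
Proof.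
rewrite /conv_hom /mkhom insubdK // unfold_in; apply/asboolP.
by have /asboolP Lf := valP f; exact: lin_comp (lin_comp Lnabla Lf) LDelta.
Qed.

Lemma conv_hom_unital f :
  Delta one = tp_mul TL one one ->
  f \in hom_unital one -> conv_hom f \in hom_unital (tp_mul TL one one).
Proof.
move=> Delta1 /eqP f1; apply/eqP.
by rewrite conv_homE /= nablax1 f1 Delta1.
Qed.

Lemma split_hom_conv (TH : tensor_product (khom L L) (khom L L)) f :
  split_hom eps one TH (conv_hom f) = tp_mul TH f f.
Proof.
rewrite /split_hom conv_homE /=.
under [X in mkhom X]funext => x do rewrite nablax1 counitr.
under [X in tp_mul _ _ (mkhom X)]funext => x do rewrite nabla1x counitl.
by rewrite /mkhom valKd.
Qed.

End Convolution.

Arguments conv_hom_unital {K L TL nabla Delta one}.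
Arguments split_hom_conv {K L TL nabla Delta eps one}.

Definition coef {K : fieldType} {V : lmodType K} (ps : seq (K * V)) (b : V) : K :=
  \sum_(p <- ps | p.2 == b) p.1.

Lemma sum_coef (K : fieldType) (V W : lmodType K) (F : V -> W) (ps : seq (K * V)) s :
  uniq s -> (forall p, p \in ps -> p.2 \in s) ->
  \sum_(p <- ps) p.1 *: F p.2 = \sum_(b <- s) coef ps b *: F b.
Proof.
move=> us; elim: ps => [|q ps IH] ps_s.
  by rewrite big_nil big1 // => b _; rewrite /coef big_nil scale0r.
have q_s : q.2 \in s by apply: ps_s; rewrite mem_head.
rewrite big_cons IH => [|p p_ps]; last by apply: ps_s; rewrite inE p_ps orbT.
have coef_cons b : coef (q :: ps) b *: F b
    = (if q.2 == b then q.1 *: F b else 0) + coef ps b *: F b.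
  by rewrite /coef big_cons; case: eqP; rewrite ?scalerDl ?add0r.
rewrite (eq_bigr _ (fun b _ => coef_cons b)) big_split /=.
rewrite [\sum_(i <- s) (if _ then _ else _)](bigD1_seq q.2) //= eqxx.
by rewrite [X in _ + X + _]big1 ?addr0 // => b; rewrite eq_sym => /negbTE ->.
Qed.

Arguments sum_coef {K V W} F {ps s}.

Section Span.
Context {K : fieldType} {V : lmodType K} {B : set V}.
Local Notation ts := (to_span B).

Definition in_B (ps : seq (K * V)) := forall p, p \in ps -> B p.2.

Lemma val_linear : linear (fun x : span_space B => span_val x).
Proof. by move=> a x y; rewrite GRing.valD GRing.valZ. Qed.

Lemma to_spanK v : v \in in_span B -> span_val (ts v) = v.
Proof. by move=> v_span; rewrite /to_span insubdK. Qed.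

Lemma span_valK (x : span_space B) : ts (span_val x) = x.
Proof. by rewrite /to_span valKd. Qed.

Lemma in_span_sum ps : in_B ps -> \sum_(p <- ps) p.1 *: p.2 \in in_span B.
Proof. by move=> ps_B; apply/asboolP; exists ps. Qed.

Lemma in_span_gen b : B b -> b \in in_span B.
Proof.
move=> Bb; have := @in_span_sum [:: (1, b)].
by rewrite big_seq1 scale1r; apply=> p /[!inE] /eqP ->.
Qed.

Lemma span_repr (x : span_space B) :
  exists ps, in_B ps /\ span_val x = \sum_(p <- ps) p.1 *: p.2.
Proof. exact/asboolP/(valP x). Qed.

Lemma to_span_sum ps :
  in_B ps -> ts (\sum_(p <- ps) p.1 *: p.2) = \sum_(p <- ps) p.1 *: ts p.2.
Proof.
move=> ps_B; apply: val_inj; rewrite /= to_spanK ?in_span_sum //.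
rewrite (lin_sum val_linear); apply: eq_big_seq => p p_ps.
by rewrite (linZ val_linear) to_spanK // in_span_gen //; exact: ps_B.
Qed.

Lemma span_linear_ext (W : lmodType K) (F1 F2 : span_space B -> W) :
  linear F1 -> linear F2 -> (forall b, B b -> F1 (ts b) = F2 (ts b)) -> F1 =1 F2.
Proof.
move=> L1 L2 E x; have [ps [ps_B x_ps]] := span_repr x.
rewrite -(span_valK x) x_ps to_span_sum // (lin_sum L1) (lin_sum L2).
by apply: eq_big_seq => p p_ps; rewrite (linZ L1) (linZ L2) E //; exact: ps_B.
Qed.

Hypothesis B_indep : lin_indep B.
Variable T : tensor_product (span_space B) (span_space B).

Definition diag_sum (ps : seq (K * V)) : T :=
  \sum_(p <- ps) p.1 *: tp_mul T (ts p.2) (ts p.2).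

(* Well-definedness of Delta_B: two representations of the same vector have the
   same coefficients on their common support, by linear independence of B. *)
Lemma diag_sum_eq {ps qs} : in_B ps -> in_B qs ->
  \sum_(p <- ps) p.1 *: p.2 = \sum_(p <- qs) p.1 *: p.2 -> diag_sum ps = diag_sum qs.
Proof.
move=> ps_B qs_B E; set s := undup (map snd (ps ++ qs)).
have us : uniq s by apply: undup_uniq.
have ps_s p : p \in ps -> p.2 \in s by move=> p_ps; rewrite mem_undup map_f ?mem_cat ?p_ps.
have qs_s p : p \in qs -> p.2 \in s.
  by move=> p_qs; rewrite mem_undup map_f // mem_cat p_qs orbT.
have s_B b : b \in s -> B b.
  by rewrite mem_undup => /mapP[p]; rewrite mem_cat => /orP[/ps_B|/qs_B] ? ->.
rewrite (sum_coef id us ps_s) (sum_coef id us qs_s) in E.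
have coef_eq : forall b, b \in s -> coef ps b - coef qs b = 0.
  apply: B_indep => //; under eq_bigr => b _ do rewrite scalerBl.
  by rewrite sumrB E subrr.
rewrite /diag_sum (sum_coef (fun b => tp_mul T (ts b) (ts b)) us ps_s).
rewrite (sum_coef (fun b => tp_mul T (ts b) (ts b)) us qs_s).
by apply: eq_big_seq => b b_s; rewrite (subr0_eq (coef_eq b b_s)).
Qed.

Definition DeltaB_spec (D : span_space B -> T) :=
  forall (s : seq V) (x : V -> K), uniq s -> (forall b, b \in s -> B b) ->
    D (ts (\sum_(b <- s) x b *: b)) = \sum_(b <- s) x b *: tp_mul T (ts b) (ts b).

Lemma DeltaBP : DeltaB_spec (DeltaB T).
Proof.
pose D0 x := diag_sum (proj1_sig (cid (span_repr x))).
suff D0P : DeltaB_spec D0 by exact: (epsilon_spec _ DeltaB_spec (ex_intro _ D0 D0P)).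
move=> s x us s_B; rewrite /D0; case: cid => ps /= [ps_B E].
pose qs := map (fun b => (x b, b)) s.
have qs_B : in_B qs by move=> p /mapP[b b_s ->]; apply: s_B.
have qs_sum : \sum_(p <- qs) p.1 *: p.2 = \sum_(b <- s) x b *: b by rewrite big_map.
rewrite (diag_sum_eq ps_B qs_B) /diag_sum ?big_map //.
by rewrite -E -qs_sum to_spanK ?in_span_sum.
Qed.

Lemma DeltaB_sum ps : in_B ps -> DeltaB T (ts (\sum_(p <- ps) p.1 *: p.2)) = diag_sum ps.
Proof.
move=> ps_B; set s := undup (map snd ps).
have us : uniq s by apply: undup_uniq.
have ps_s p : p \in ps -> p.2 \in s by move=> p_ps; rewrite mem_undup map_f.
have s_B b : b \in s -> B b by rewrite mem_undup => /mapP[p /ps_B ? ->].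
by rewrite (sum_coef id us ps_s) DeltaBP // /diag_sum
  (sum_coef (fun b => tp_mul T (ts b) (ts b)) us ps_s).
Qed.

Lemma DeltaB_gen b : B b -> DeltaB T (ts b) = tp_mul T (ts b) (ts b).
Proof.
move=> Bb; have := @DeltaB_sum [:: (1, b)].
by rewrite big_seq1 scale1r /diag_sum big_seq1 scale1r; apply=> p /[!inE] /eqP ->.
Qed.

Lemma DeltaB_linear : linear (DeltaB T).
Proof.
move=> a x y; have [ps [ps_B x_ps]] := span_repr x; have [qs [qs_B y_qs]] := span_repr y.
pose rs := map (fun p => (a * p.1, p.2)) ps ++ qs.
have rs_B : in_B rs by move=> p /[!mem_cat] /orP[/mapP[q /ps_B ? ->] | /qs_B].
have sum_rs : \sum_(p <- rs) p.1 *: p.2 = a *: span_val x + span_val y.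
  rewrite big_cat big_map x_ps y_qs scaler_sumr.
  by congr (_ + _); apply: eq_bigr => p _; rewrite scalerA.
have -> : a *: x + y = ts (\sum_(p <- rs) p.1 *: p.2).
  by apply: val_inj; rewrite /= to_spanK ?in_span_sum // sum_rs.
rewrite -(span_valK x) -(span_valK y) x_ps y_qs !DeltaB_sum //.
rewrite /diag_sum big_cat big_map scaler_sumr.
by congr (_ + _); apply: eq_bigr => p _; rewrite scalerA.
Qed.

End Span.

Section GroupLikeSpan.
Context {K : fieldType} {V : lmodType K} {B : set V}.
Hypothesis B_indep : lin_indep B.
Variables (T : tensor_product (span_space B) (span_space B))
          (Tl : tensor_product T (span_space B)) (Tr : tensor_product (span_space B) T).
Variable e : span_space B -> K.
Hypotheses (e_scalar : scalar e) (e_gen : forall b, B b -> e (to_span B b) = 1).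

Lemma tlift_DeltaB (g : span_space B -> span_space B -> span_space B) :
  (forall w, linear (fun v => g v w)) -> (forall v, linear (g v)) ->
  (forall b, B b -> g (to_span B b) (to_span B b) = to_span B b) ->
  forall x, tlift T g (DeltaB T x) = x.
Proof.
move=> gl gr g_gen; have [Lt Pt] := tliftP T gl gr.
apply: span_linear_ext (lin_comp (DeltaB_linear B_indep T) Lt) (@lin_id _ _) _ => b Bb.
by rewrite /= DeltaB_gen // Pt g_gen.
Qed.

Lemma grouplike_span_coalgebra : is_coalgebra Tl Tr (DeltaB T) e.
Proof.
have LD := DeltaB_linear B_indep T.
have [Lm1 Pm1] := tmapP T Tl LD (@lin_id _ (span_space B)).
have [Lm2 Pm2] := tmapP T Tr (@lin_id _ (span_space B)) LD.
have [La Pa] := tassocP Tl Tr.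
split=> //.
- apply: span_linear_ext (lin_comp LD (lin_comp Lm1 La)) (lin_comp LD Lm2) _ => b Bb.
  by rewrite /= !(DeltaB_gen B_indep) // Pm1 Pm2 (DeltaB_gen B_indep) // Pa.
- apply: tlift_DeltaB => [w k u v | v k u w | b Bb] /=.
  + by rewrite e_scalar scalerDl scalerA.
  + by rewrite scalerDr !scalerA mulrC.
  + by rewrite e_gen // scale1r.
- apply: tlift_DeltaB => [w k u v | v k u w | b Bb] /=.
  + by rewrite scalerDr !scalerA mulrC.
  + by rewrite e_scalar scalerDl scalerA.
  + by rewrite e_gen // scale1r.
Qed.

End GroupLikeSpan.

Lemma epsB_scalar (K : fieldType) (L : lmodType K) (eps : L -> K) one (B : set (khom L L)) :
  scalar eps -> scalar (epsB eps one B).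
Proof.
move=> Seps a x y; rewrite /epsB /=.
exact: Seps a (hom_fun (span_val x) one) (hom_fun (span_val y) one).
Qed.

Lemma epsB_gen (K : fieldType) (L : lmodType K) (eps : L -> K) one (B : set (khom L L)) b :
  eps one = 1 -> b \in hom_unital one -> B b -> epsB eps one B (to_span B b) = 1.
Proof.
by move=> eps1 /eqP b1 Bb; rewrite /epsB to_spanK ?in_span_gen // b1.
Qed.

Theorem proposition4p9 (K : fieldType) (L : lmodType K)
    (TL : tensor_product L L) (TLl : tensor_product TL L) (TLr : tensor_product L TL)
    (nabla : TL -> L) (eta : K -> L) (Delta : L -> TL) (eps : L -> K) :
  is_algebra TLl TLr nabla eta ->
  is_coalgebra TLl TLr Delta eps ->
  (forall k, eps (eta k) = k) ->
  (forall k, Delta (eta k) = tp_mul TL (eta k) (eta 1)) ->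
  let one := eta 1 in
  (forall (TH : tensor_product (khom L L) (khom L L)) (f : khom L L),
     f \in hom_unital one ->
     exists G : khom TL TL,
       (G : TL -> TL) = Delta \o f \o nabla /\
       G \in hom_unital (tp_mul TL one one) /\
       split_hom eps one TH G = tp_mul TH f f) /\
  (forall B : set (khom L L),
     lin_indep B -> (forall b, B b -> b \in hom_unital one) ->
     forall (TB : tensor_product (span_space B) (span_space B))
            (TBl : tensor_product TB (span_space B))
            (TBr : tensor_product (span_space B) TB),
       is_coalgebra TBl TBr (DeltaB TB) (epsB eps one B)).
Proof.
move=> [Lnabla _ _ unitl unitr] [LDelta Seps _ counitl counitr] eps_eta Delta_eta one.
have nabla1x x : nabla (tp_mul TL one x) = x by rewrite unitl scale1r.
have nablax1 x : nabla (tp_mul TL x one) = x by rewrite unitr scale1r.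
split=> [TH f f1 | B B_indep B_unital TB TBl TBr].
  exists (conv_hom nabla Delta f); split; first exact: conv_homE.
  split; first exact: conv_hom_unital Lnabla LDelta nablax1 f (Delta_eta 1) f1.
  exact: (split_hom_conv Lnabla LDelta nabla1x nablax1 counitl counitr TH f).
apply: grouplike_span_coalgebra => //; first exact: epsB_scalar.
by move=> b Bb; apply: epsB_gen; rewrite ?eps_eta ?B_unital.
Qed.
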